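(* Let $p\in\mathcal P$. If $\mu(p)\ge\mu_a$, then $\Gamma_{\mu(p)}(p)$ is acyclic. In particular, if $n\in\{2,3\}$, then $\Gamma_{\mu(p)}(p)$ is acyclic for every $p\in\mathcal P$.
   Context: Let $n,h\ge2$, $N=\{1,\dots,n\}$, $H=\{1,\dots,h\}$, $\mathcal P$ the set of $h$-tuples of linear orders on $N$; $x>_{p_i}y$ means $x\neq y$ and $p_i$ ranks $x$ above $y$; for an integer $\mu\in(h/2,h]$, $x>^p_\mu y$ means $|\{i: x>_{p_i}y\}|\ge\mu$; $D_\mu(p)=\{x\in N: \forall y,\ |\{i: y>_{p_i}x\}|<\mu\}$; $\mu(p)=\min\{\mu\in\mathbb N\cap(h/2,h]: D_\mu(p)\ne\varnothing\}$. The acyclicity threshold is $\mu_a=\min\{m\in\mathbb N\cap(h/2,h]: m>\frac{n-2}{n-1}h\}$. $\Gamma_\mu(p)$ is the directed graph $(N,\{(x,y): x>^p_\mu y\})$; it is acyclic if it contains no directed cycle on $l\ge2$ distinct vertices as a subgraph. *)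

From mathcomp Require Import all_boot.
Set Implicit Arguments. Unset Strict Implicit. Unset Printing Implicit Defensive.

(* N = 'I_n (voters' alternatives, 0-indexed), H = 'I_h (voters).
   A linear order on N is represented by its strict part r : rel 'I_n,
   with  r x y  meaning "x is ranked above y" (x >_{p_i} y). *)
Definition linear_order (n : nat) (r : rel 'I_n) : Prop :=
  [/\ (forall x, ~~ r x x),
      (forall x y z, r x y -> r y z -> r x z) &
      (forall x y, x != y -> r x y || r y x)].

Definition profile (n h : nat) := 'I_h -> rel 'I_n.

Definition is_profile (n h : nat) (p : profile n h) : Prop :=
  forall i, linear_order (p i).

Definition votes (n h : nat) (p : profile n h) (x y : 'I_n) : nat :=
  #|[set i : 'I_h | p i x y]|.

Definition maj (n h : nat) (mu : nat) (p : profile n h) (x y : 'I_n) : bool :=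
  mu <= votes p x y.

Definition inD (n h : nat) (mu : nat) (p : profile n h) (x : 'I_n) : bool :=
  [forall y, votes p y x < mu].

(* mu(p) = min { mu integer in (h/2, h] : D_mu(p) <> empty };
   integers in (h/2,h] are exactly h./2 < mu <= h.  The default h is
   never used since D_h(p) is nonempty. *)
Definition mu_p (n h : nat) (p : profile n h) : nat :=
  \big[minn/h]_((h./2).+1 <= m < h.+1 | [exists x, inD m p x]) m.

(* mu_a = min { m integer in (h/2, h] : m > (n-2)/(n-1) h },
   i.e. m * (n-1) > (n-2) * h (n >= 2). Default h is attained anyway. *)
Definition mu_a (n h : nat) : nat :=
  \big[minn/h]_((h./2).+1 <= m < h.+1 | (n - 2) * h < m * (n - 1)) m.

Definition Gamma (n h : nat) (mu : nat) (p : profile n h) : rel 'I_n :=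
  fun x y => maj mu p x y.

Definition acyclic (n : nat) (e : rel 'I_n) : Prop :=
  forall s : seq 'I_n, 2 <= size s -> uniq s -> ~~ cycle e s.

From mathcomp Require Import all_boot.
From mathcomp Require Import zify.

Set Implicit Arguments.
Unset Strict Implicit.
Unset Printing Implicit Defensive.

(* Let x0 lie in D_mu(p) and let s be a cycle of Gamma_mu(p) of length l.
   A strict linear order cannot rank every vertex of s above its successor,
   so each voter supports at most l - 1 of the l edges of s, whereas every
   edge has at least mu supporters: l * mu <= h * (l - 1).  No edge enters
   x0, so x0 is off the cycle and l <= n - 1; hence
   mu > (n-2)/(n-1) h >= (l-1)/l h, a contradiction.  Any voter's top choice
   lies in D_h(p), so D_mu(p) is nonempty at mu = mu(p); for n <= 3 the
   threshold mu_a is the least majority h/2 + 1, which is at most mu(p). *)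

Lemma big_minn_ind (I : Type) (K : nat -> Prop) (r : seq I) (P : pred I)
    (F : I -> nat) (d : nat) :
  K d -> (forall i, P i -> K (F i)) -> K (\big[minn/d]_(i <- r | P i) F i).
Proof.
by move=> Kd KF; apply: big_ind => // a b Ka Kb; rewrite /minn; case: ifP.
Qed.

Lemma big_minn_le (I : eqType) (r : seq I) (P : pred I) (F : I -> nat)
    (d : nat) (x : I) :
  x \in r -> P x -> \big[minn/d]_(i <- r | P i) F i <= F x.
Proof.
elim: r => // y r IH; rewrite inE big_cons => /orP[/eqP <- -> | xr Px].
  exact: geq_minl.
by case: ifP => _; [apply: leq_trans (geq_minr _ _) _|]; apply: IH.
Qed.

Lemma sum_nat_of_bool (T : Type) (s : seq T) (a : pred T) :
  \sum_(x <- s) a x = count a s.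
Proof. by elim: s => [|x s IH]; rewrite ?big_nil ?big_cons ?IH. Qed.

Lemma count_next_lt_size (T : eqType) (r : rel T) (s : seq T) :
  irreflexive r -> transitive r -> 0 < size s -> uniq s ->
  count (fun x => r x (next s x)) s < size s.
Proof.
move=> irr tr s_gt0 s_uniq; rewrite ltn_neqAle count_size andbT -all_count.
apply/allP => /(cycle_from_next s_uniq); case: s s_gt0 {s_uniq} => // x s _ /=.
by move/(order_path_min tr); rewrite all_rcons irr.
Qed.

Lemma size_lt_card_notin (T : finType) (s : seq T) (x : T) :
  uniq s -> x \notin s -> size s < #|T|.
Proof.
move=> s_uniq xNs; rewrite -(card_uniqP s_uniq); apply: proper_card.
by apply/properP; split; [apply/subsetP | exists x].
Qed.

Lemma ltn_threshold_shrink (h mu k l : nat) :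
  0 < l <= k -> (k - 1) * h < mu * k -> (l - 1) * h < mu * l.
Proof. nia. Qed.

Section Profile.

Variables (n h : nat) (p : profile n h).
Hypothesis p_linear : is_profile p.

Lemma votesE (x y : 'I_n) : votes p x y = \sum_(i < h) p i x y.
Proof. by rewrite /votes -sum1_card big_mkcond; apply: eq_bigr => i _; rewrite inE. Qed.

Lemma sum_votes_next_le (s : seq 'I_n) :
  0 < size s -> uniq s -> \sum_(x <- s) votes p x (next s x) <= h * (size s).-1.
Proof.
move=> s_gt0 s_uniq; under eq_bigr do rewrite votesE; rewrite exchange_big /=.
rewrite -[h in h * _]card_ord -sum_nat_const.
apply: leq_sum => i _; rewrite sum_nat_of_bool -ltnS prednK //.
have [irr tr _] := p_linear i.
by apply: count_next_lt_size => // [y | y x z]; [apply/negbTE/irr | apply: tr].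
Qed.

Lemma inD_notin_cycle (mu : nat) (x0 : 'I_n) (s : seq 'I_n) :
  inD mu p x0 -> uniq s -> cycle (Gamma mu p) s -> x0 \notin s.
Proof.
move=> /forallP x0_undefeated s_uniq s_cycle; apply/negP => x0s.
have prev_x0s : prev s x0 \in s by rewrite mem_prev.
have := next_cycle s_cycle prev_x0s; rewrite next_prev // /Gamma /maj.
by rewrite leqNgt x0_undefeated.
Qed.

Lemma Gamma_acyclic_of_inD (mu : nat) (x0 : 'I_n) :
  inD mu p x0 -> (n - 2) * h < mu * (n - 1) -> acyclic (Gamma mu p).
Proof.
move=> x0_inD mu_large s s_ge2 s_uniq; apply/negP => s_cycle.
have s_lt : size s < n.
  rewrite -[X in _ < X]card_ord; apply: (size_lt_card_notin s_uniq).
  exact: inD_notin_cycle x0_inD s_uniq s_cycle.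
have weight_ge : size s * mu <= \sum_(x <- s) votes p x (next s x).
  rewrite (_ : size s * mu = \sum_(x <- s) mu); last first.
    by rewrite big_const_seq count_predT iter_addn_0 mulnC.
  rewrite big_seq [leqRHS]big_seq.
  by apply: leq_sum => x xs; apply: next_cycle s_cycle xs.
have cycle_short : (size s - 1) * h < mu * size s.
  apply: (ltn_threshold_shrink (k := n - 1)); first lia.
  by rewrite -subnDA; exact: mu_large.
have := leq_trans weight_ge (sum_votes_next_le (ltnW s_ge2) s_uniq).
lia.
Qed.

Lemma exists_inD_top : 0 < n -> 0 < h -> exists x, inD h p x.
Proof.
move=> n_gt0 h_gt0; pose v0 := Ordinal h_gt0.
have [irr tr _] := p_linear v0.
pose below x := #|[set z | p v0 x z]|.
have [x _ x_max] := @arg_maxnP _ (Ordinal n_gt0) predT below isT.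
exists x; apply/forallP => y.
have yNx : ~~ p v0 y x.
  apply: contraL (x_max y isT) => yx; rewrite -ltnNge; apply: proper_card.
  apply/properP; split; first by apply/subsetP => z; rewrite !inE; apply: tr.
  by exists x; rewrite !inE ?yx ?(negbTE (irr x)).
have : votes p y x <= #|[set i : 'I_h | i != v0]|.
  apply/subset_leq_card/subsetP => i; rewrite !inE.
  by apply: contraTneq => ->.
by rewrite cardsE cardC1 card_ord => /leq_ltn_trans; apply; rewrite ltn_predL.
Qed.

Lemma exists_inD_mu_p : 0 < n -> 0 < h -> exists x, inD (mu_p p) p x.
Proof.
move=> n_gt0 h_gt0; apply: (big_minn_ind (K := fun m => exists x, inD m p x)).
  exact: exists_inD_top.
by move=> m /existsP.
Qed.

Lemma mu_p_gt_half : 0 < h -> h./2 < mu_p p.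
Proof.
move=> h_gt0; rewrite /mu_p big_seq_cond.
apply: (big_minn_ind (K := fun m => h./2 < m)) => [|m].
  by rewrite ltn_half_double -addnn -addn1 leq_add2l.
by rewrite mem_index_iota => /andP[/andP[]].
Qed.

End Profile.

Lemma mu_a_gt (n h : nat) : 2 <= n -> 0 < h -> (n - 2) * h < mu_a n h * (n - 1).
Proof.
move=> n_ge2 h_gt0.
by apply: (big_minn_ind (K := fun m => (n - 2) * h < m * (n - 1))) => //; nia.
Qed.

Lemma mu_a_small (n h : nat) :
  (n == 2) || (n == 3) -> 0 < h -> mu_a n h <= (h./2).+1.
Proof.
move=> n_small h_gt0; apply: big_minn_le.
  by rewrite mem_index_iota leqnn ltnS ltn_half_double -addnn; lia.
have : h < (h./2).+1 + (h./2).+1 by rewrite addnn -ltn_half_double.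
by case/orP: n_small => /eqP ->; lia.
Qed.

Theorem corollary7 (n h : nat) (hn : 2 <= n) (hh : 2 <= h)
    (p : profile n h) (hp : is_profile p) :
  (mu_a n h <= mu_p p -> acyclic (Gamma (mu_p p) p)) /\
  ((n == 2) || (n == 3) -> acyclic (Gamma (mu_p p) p)).
Proof.
have [n_gt0 h_gt0] : 0 < n /\ 0 < h by split; apply: ltnW.
have [x0 x0_inD] := exists_inD_mu_p hp n_gt0 h_gt0.
have acyclic_above_mu_a : mu_a n h <= mu_p p -> acyclic (Gamma (mu_p p) p).
  move=> mu_a_le; apply: (Gamma_acyclic_of_inD hp x0_inD).
  exact: leq_trans (mu_a_gt hn h_gt0) (leq_mul mu_a_le (leqnn _)).
split=> // n_small; apply: acyclic_above_mu_a.
exact: leq_trans (mu_a_small n_small h_gt0) (mu_p_gt_half p h_gt0).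
Qed.
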